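(* Assume that $\mathcal{G}_{\log}\neq\emptyset$, that the set $\mathcal{X}\cap\Omega_{\log}$ is compact, and that the initial point $\mathbf{x}_0\in\mathcal{X}$ satisfies $g_\ell(\mathbf{x}_0)<0$ for all $\ell\in\mathcal{G}_{\log}$. Let $\{\mathbf{x}_k\}$, $\{\rho_k\}$, $\{\alpha_k\}$ be the sequences of iterates, penalty-barrier parameters and step-sizes generated by Algorithm LOG-DS. Then the index set $\mathcal{K}_\rho=\{k\in\mathbb{N}\mid \rho_{k+1}<\rho_k\}$ is infinite, $$\lim_{k\to+\infty}\rho_k=0,\qquad\text{and}\qquad \lim_{k\to+\infty,\ k\in\mathcal{K}_\rho}\alpha_k=0.$$
   Context: Problem (P): minimize $f(\mathbf{x})$ subject to $g_\ell(\mathbf{x})\le 0$ ($\ell=1,\dots,m$), $h_j(\mathbf{x})=0$ ($j=1,\dots,p$), $\mathbf{x}\in\mathcal{X}$, where $\mathcal{X}=\{\mathbf{x}\in\mathbb{R}^n\mid \mathbf{A}\mathbf{x}\le\mathbf{b}\}$ with $\mathbf{A}\in\mathbb{R}^{q\times n}$ (rows $\mathbf{a}_i^\top$), $\mathbf{b}\in\mathbb{R}^q$, and $f,g_\ell,h_j$ are real-valued and continuously differentiable on an open set containing $\mathcal{X}$. Given an initial point $\mathbf{x}_0$, set $\mathcal{G}_{\log}=\{\ell\in\{1,\dots,m\}\mid g_\ell(\mathbf{x}_0)<0\}$, $\mathcal{G}_{\rm ext}=\{\ell\in\{1,\dots,m\}\mid g_\ell(\mathbf{x}_0)\ge 0\}$,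 and $\Omega_{\log}=\{\mathbf{x}\in\mathbb{R}^n\mid g_\ell(\mathbf{x})\le 0,\ \ell\in\mathcal{G}_{\log}\}$. For $\rho>0$ and $\nu\in(1,2]$ the merit function is $$Z(\mathbf{x};\rho)=f(\mathbf{x})-\rho\sum_{\ell\in\mathcal{G}_{\log}}\log(-g_\ell(\mathbf{x}))+\frac{1}{\rho^{\nu-1}}\sum_{\ell\in\mathcal{G}_{\rm ext}}(\max\{g_\ell(\mathbf{x}),0\})^\nu+\frac{1}{\rho^{\nu-1}}\sum_{j=1}^p|h_j(\mathbf{x})|^\nu$$ if $\mathbf{x}\in\mathcal{X}$ and $g_\ell(\mathbf{x})<0$ for all $\ell\in\mathcal{G}_{\log}$, and $Z(\mathbf{x};\rho)=+\infty$ otherwise. A forcing function is a continuous nondecreasing $\xi:[0,+\infty)\to[0,+\infty)$ with $\xi(t)/t\to0$ as $t\downarrow0$ and such that $\xi(t_k)\to0$ implies $t_k\to0$. Algorithm LOG-DS. Data: $\mathbf{x}_0\in\mathcal{X}$ with $g_\ell(\mathbf{x}_0)<0$ for $\ell\in\mathcal{G}_{\log}$; a collection $\mathcal{D}$ of finite sets of unit vectors in $\mathbb{R}^n$; $\alpha_0>0$; $\rho_0>0$; $\nu\in(1,2]$; $\theta_\alpha,\theta_\rho\in(0,1)$; $\phi\ge1$; $\beta>1$; a forcing function $\xi$. At each iteration $k=0,1,2,\dots$: (Search, optional) if some $\mathbf{z}_k\in\mathcal{X}$ with $Z(\mathbf{z}_k;\rho_k)\le Z(\mathbf{x}_k;\rho_k)-\xi(\alpha_k)$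 is found, set $\mathbf{x}_{k+1}=\mathbf{z}_k$, $\alpha_{k+1}=\phi\alpha_k$, $\rho_{k+1}=\rho_k$ (successful iteration) and go to iteration $k+1$. Otherwise (Poll) select $\mathcal{D}_k\in\mathcal{D}$; if some $\mathbf{d}\in\mathcal{D}_k$ satisfies $\mathbf{x}_k+\alpha_k\mathbf{d}\in\mathcal{X}$ and $Z(\mathbf{x}_k+\alpha_k\mathbf{d};\rho_k)\le Z(\mathbf{x}_k;\rho_k)-\xi(\alpha_k)$, set $\mathbf{x}_{k+1}=\mathbf{x}_k+\alpha_k\mathbf{d}$, $\alpha_{k+1}=\phi\alpha_k$, $\rho_{k+1}=\rho_k$ (successful iteration). Otherwise the iteration is unsuccessful: set $\mathbf{x}_{k+1}=\mathbf{x}_k$, $\alpha_{k+1}=\theta_\alpha\alpha_k$, and (Penalty-barrier update) with $(g_{\min})_k=\min_{\ell\in\mathcal{G}_{\log}}|g_\ell(\mathbf{x}_k)|$, set $\rho_{k+1}=\theta_\rho\rho_k$ if $\alpha_{k+1}\le\min\{\rho_k^\beta,(g_{\min})_k^2\}$, and $\rho_{k+1}=\rho_k$ otherwise. *)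

From HB Require Import structures.
From mathcomp Require Import all_boot all_order all_algebra.
From mathcomp Require Import all_classical all_reals all_analysis.
Set Implicit Arguments. Unset Strict Implicit. Unset Printing Implicit Defensive.
Import Order.TTheory GRing.Theory Num.Theory.
Import numFieldNormedType.Exports.
Local Open Scope classical_set_scope.
Local Open Scope ring_scope.

Section LogDS.
Variable R : realType.

Definition polyhedron (n q : nat) (A : 'M[R]_(q, n)) (b : 'cV[R]_q) : set 'cV[R]_n :=
  [set x | forall i : 'I_q, (A *m x) i 0 <= b i 0].

Definition unit_vec (n : nat) (d : 'cV[R]_n) : Prop :=
  Num.sqrt (\sum_(i < n) d i 0 ^+ 2) = 1.

Definition C1_on (n : nat) (U : set 'cV[R]_n) (F : 'cV[R]_n -> R) : Prop :=
  forall v : 'cV[R]_n,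
    (forall x, U x -> derivable F x v) /\
    (forall x, U x -> {for x, continuous ('D_v F)}).

Definition forcing_function (xi : R -> R) : Prop :=
  {within `[0, +oo[, continuous xi} /\
  (forall s t, 0 <= s -> s <= t -> xi s <= xi t) /\
  (forall t, 0 <= t -> 0 <= xi t) /\
  ((fun t => xi t / t) @ 0^'+ --> 0) /\
  (forall tk : nat -> R, (forall k, 0 <= tk k) ->
      (xi \o tk) @ \oo --> 0 -> tk @ \oo --> 0).

Definition Glog (n m : nat) (g : 'I_m -> 'cV[R]_n -> R) (x0 : 'cV[R]_n) : pred 'I_m :=
  fun l => g l x0 < 0.
Definition Gext (n m : nat) (g : 'I_m -> 'cV[R]_n -> R) (x0 : 'cV[R]_n) : pred 'I_m :=
  fun l => 0 <= g l x0.

Definition Omega_log (n m : nat) (g : 'I_m -> 'cV[R]_n -> R) (x0 : 'cV[R]_n)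
  : set 'cV[R]_n := [set x | forall l, Glog g x0 l -> g l x <= 0].

Definition meritZ (n m p q : nat) (A : 'M[R]_(q, n)) (b : 'cV[R]_q)
  (f : 'cV[R]_n -> R) (g : 'I_m -> 'cV[R]_n -> R) (h : 'I_p -> 'cV[R]_n -> R)
  (x0 : 'cV[R]_n) (nu : R) (x : 'cV[R]_n) (rho : R) : \bar R :=
  if pselect (polyhedron A b x /\ forall l, Glog g x0 l -> g l x < 0) then
    (f x - rho * (\sum_(l < m | Glog g x0 l) ln (- g l x))
     + (rho `^ (nu - 1))^-1 * (\sum_(l < m | Gext g x0 l) (Num.max (g l x) 0) `^ nu)
     + (rho `^ (nu - 1))^-1 * (\sum_(j < p) `|h j x| `^ nu))%:E
  else +oo%E.

(* (g_min)(x) = min_{l in G_log} |g_l(x)| (finite when G_log is nonempty). *)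
Definition gmin (n m : nat) (g : 'I_m -> 'cV[R]_n -> R) (x0 x : 'cV[R]_n) : R :=
  fine (\big[Order.min/+oo%E]_(l < m | Glog g x0 l) (`|g l x|)%:E).

Definition suff_decrease (n : nat) (Z : 'cV[R]_n -> R -> \bar R) (y xk : 'cV[R]_n)
  (r c : R) : Prop := (Z y r <= Z xk r - c%:E)%E.

(* The sequences (x_k, alpha_k, rho_k) are generated by Algorithm LOG-DS
   (with some admissible choice of search points / poll sets / polling
   directions at every iteration). *)
Definition logds_run (n m p q : nat) (A : 'M[R]_(q, n)) (b : 'cV[R]_q)
  (f : 'cV[R]_n -> R) (g : 'I_m -> 'cV[R]_n -> R) (h : 'I_p -> 'cV[R]_n -> R)
  (x0 : 'cV[R]_n) (DD : set (seq 'cV[R]_n)) (alpha0 rho0 nu theta_a theta_r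
   phi beta : R) (xi : R -> R)
  (x : nat -> 'cV[R]_n) (alpha rho : nat -> R) : Prop :=
  let Z := meritZ A b f g h x0 nu in
  [/\ x 0%N = x0, alpha 0%N = alpha0, rho 0%N = rho0 &
  forall k : nat,
    (* successful search step *)
    (polyhedron A b (x k.+1) /\
     suff_decrease Z (x k.+1) (x k) (rho k) (xi (alpha k)) /\
     alpha k.+1 = phi * alpha k /\ rho k.+1 = rho k)
    \/
    (exists Dk : seq 'cV[R]_n, DD Dk /\
      (
       (exists d, d \in Dk /\
          polyhedron A b (x k + alpha k *: d) /\
          suff_decrease Z (x k + alpha k *: d) (x k) (rho k) (xi (alpha k)) /\
          x k.+1 = x k + alpha k *: d /\
          alpha k.+1 = phi * alpha k /\ rho k.+1 = rho k)
       \/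
       ((forall d, d \in Dk ->
          ~ (polyhedron A b (x k + alpha k *: d) /\
             suff_decrease Z (x k + alpha k *: d) (x k) (rho k) (xi (alpha k)))) /\
        x k.+1 = x k /\ alpha k.+1 = theta_a * alpha k /\
        rho k.+1 = (if alpha k.+1 <= Num.min (rho k `^ beta) (gmin g x0 (x k) ^+ 2)
                    then theta_r * rho k else rho k))))].

End LogDS.

From HB Require Import structures.
From mathcomp Require Import all_boot all_order all_algebra.
From mathcomp Require Import all_classical all_reals all_analysis.
From mathcomp Require Import ring lra.
Set Implicit Arguments. Unset Strict Implicit. Unset Printing Implicit Defensive.
Import Order.TTheory GRing.Theory Num.Theory.
Import numFieldNormedType.Exports.
Local Open Scope classical_set_scope.
Local Open Scope ring_scope.

(* Along the run the merit function stays finite, so the iterates remain in the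
   compact set X ∩ Ω_log, on which the C^1 data f and g_l are bounded.  If rho were
   eventually constant, the merit function would be a fixed function, nonincreasing
   and bounded below along the iterates; the log-barrier keeps min_l |g_l| above a
   positive constant on its sublevel set, so the penalty-barrier test fails only
   while alpha stays above a positive threshold.  Then alpha is bounded away from 0,
   so finitely many decreases of size xi(alpha_k) are possible, after which alpha
   would contract geometrically: a contradiction.  Hence rho is multiplied by
   theta_r infinitely often and tends to 0, and at each such k,
   theta_a alpha_k = alpha_{k+1} <= rho_k^beta <= rho_k. *)

Section RealIncrements.
Variable R : realType.

Lemma ler_dist_derive_segment (F dF : R -> R) (a b M : R) :
  a <= b -> (forall t, a <= t <= b -> is_derive t (1 : R) F (dF t)) ->
  (forall t, a <= t <= b -> `|dF t| <= M) -> `|F b - F a| <= M * (b - a).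
Proof.
move=> ab Fd dFM.
have Fcont : {within `[a, b], continuous F}.
  apply: derivable_within_continuous => t; rewrite in_itv /= => tab.
  by case: (Fd t tab).
have Fd' t : t \in `]a, b[ -> is_derive t (1 : R) F (dF t).
  by rewrite in_itv /= => /andP[/ltW ? /ltW ?]; apply: Fd; apply/andP.
have [c cab ->] := MVT_segment ab Fd' Fcont.
rewrite normrM (ger0_norm (_ : 0 <= b - a)) ?subr_ge0 //.
by rewrite ler_wpM2r ?subr_ge0 // dFM //; move: cab; rewrite in_itv.
Qed.

Lemma ler_norm_increment_derive (F dF : R -> R) (w M : R) :
  (forall t, `|t| <= `|w| -> is_derive t (1 : R) F (dF t)) ->
  (forall t, `|t| <= `|w| -> `|dF t| <= M) -> `|F w - F 0| <= M * `|w|.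
Proof.
move=> Fd dFM; have [w0|w0] := leP 0 w.
  have inw t : 0 <= t <= w -> `|t| <= `|w|.
    by move=> /andP[t0 tw]; rewrite !ger0_norm // (le_trans t0).
  rewrite (ger0_norm w0) -[X in M * X]subr0.
  by apply: ler_dist_derive_segment => // t /inw; [apply: Fd | apply: dFM].
have inw t : w <= t <= 0 -> `|t| <= `|w|.
  by move=> /andP[wt t0]; rewrite !ler0_norm ?lerN2 // (le_trans wt t0).
rewrite distrC (ltr0_norm w0) -[X in M * X]add0r.
by apply: ler_dist_derive_segment => [|t /inw|t /inw]; [exact: ltW | apply: Fd | apply: dFM].
Qed.

Lemma derivable_is_derive_line (V : normedModType R) (F : V -> R) (z e : V) (t : R) :
  derivable F (z + t *: e) e ->
  is_derive t (1 : R) (fun s => F (z + s *: e)) ('D_e F (z + t *: e)).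
Proof.
move=> Fd.
have E : (fun s : R => s^-1 *: (((fun s => F (z + s *: e)) \o shift t) (s *: 1) - F (z + t *: e)))
   = (fun s : R => s^-1 *: ((F \o shift (z + t *: e)) (s *: e) - F (z + t *: e))).
  by apply: funext => s /=; rewrite [_%:A]mulr1 scalerDl addrCA.
by split; [rewrite /derivable E | rewrite /derive E].
Qed.

End RealIncrements.

Section ContinuousPartials.
Variables (R : realType) (n : nat).
Implicit Types (x y w : 'cV[R]_n) (F : 'cV[R]_n -> R).

Lemma ball_cVP x y (r : R) : 0 < r -> ball x r y <-> forall i, `|y i 0 - x i 0| < r.
Proof.
move=> r0; split=> [[_ xy] i|xy]; first by have := xy i 0; rewrite -ball_normE /= distrC.
by split=> // i j; rewrite (ord1 j) -ball_normE /= distrC.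
Qed.

Definition coord_prefix (k : nat) w : 'cV[R]_n := \col_i (if (i < k)%N then w i 0 else 0).

Lemma coord_prefix0 w : coord_prefix 0 w = 0.
Proof. by apply/matrixP => i j; rewrite !mxE. Qed.

Lemma coord_prefix_full w : coord_prefix n w = w.
Proof. by apply/matrixP => i j; rewrite !mxE ltn_ord (ord1 j). Qed.

Lemma coord_prefixS k w (kn : (k < n)%N) :
  coord_prefix k.+1 w = coord_prefix k w + w (Ordinal kn) 0 *: delta_mx (Ordinal kn) 0.
Proof.
apply/matrixP => i j; rewrite !mxE (ord1 j) ltnS leq_eqVlt eqxx andbT.
have [ik|ik] := eqVneq (nat_of_ord i) k.
  have -> : i == Ordinal kn by apply/eqP/val_inj.
  by rewrite ik ltnn mulr1 add0r; congr (w _ _); exact/val_inj.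
have -> : (i == Ordinal kn) = false by apply/negbTE; apply: contra ik => /eqP ->.
by rewrite mulr0 addr0.
Qed.

(* The path from [x] to [x + w] moves one coordinate at a time; on each leg the mean
   value theorem applies with a bound on the corresponding partial derivative. *)
Lemma ler_coord_prefix_increment F x (r M d : R) w :
  0 < r -> d <= r -> (forall i, `|w i 0| < d) ->
  (forall y, ball x r y ->
     (forall v, derivable F y v) /\ forall j, `|'D_(delta_mx j 0) F y| <= M) ->
  forall k, (k <= n)%N -> `|F (x + coord_prefix k w) - F x| <= k%:R * (M * d).
Proof.
move=> r0 dr wd Fball; elim=> [|k IH] kn.
  by rewrite coord_prefix0 addr0 subrr normr0 mul0r.
rewrite (coord_prefixS _ kn) addrA.
set j := Ordinal kn; set e : 'cV[R]_n := delta_mx j 0; set z := x + coord_prefix k w.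
have on_leg t : `|t| <= `|w j 0| -> ball x r (z + t *: e).
  move=> tw; apply/ball_cVP => // i.
  rewrite /z !mxE eqxx andbT -addrA (addrC (x i 0)) addrK.
  have [ik|ki] := ltnP i k.
    have -> : (i == j) = false by apply/negbTE/eqP => ij; move: ik; rewrite ij ltnn.
    by rewrite mulr0 addr0 (lt_le_trans (wd i) dr).
  rewrite add0r; case: eqP => _; last by rewrite mulr0 normr0.
  by rewrite mulr1 (le_lt_trans tw) // (lt_le_trans (wd j) dr).
have M0 : 0 <= M by apply: le_trans (normr_ge0 _) ((Fball x (ballxx _ r0)).2 j).
have leg : `|F (z + w j 0 *: e) - F z| <= M * d.
  have := @ler_norm_increment_derive R (fun s => F (z + s *: e))
    (fun s => 'D_e F (z + s *: e)) (w j 0) M.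
  rewrite /= scale0r addr0 => /(_ _ _)/le_trans; apply.
  - by move=> t /on_leg /Fball [Fd _]; exact: derivable_is_derive_line.
  - by move=> t /on_leg /Fball [_]; apply.
  - by rewrite ler_wpM2l // ltW.
apply: le_trans (ler_distD (F z) _ _) _.
by rewrite -natr1 mulrDl mul1r [X in _ <= X]addrC lerD // IH // ltnW.
Qed.

Lemma C1_on_continuous (U : set 'cV[R]_n) F x :
  open U -> C1_on U F -> U x -> {for x, continuous F}.
Proof.
move=> oU FC1 Ux.
pose D (j : 'I_n) y := 'D_(delta_mx j 0 : 'cV[R]_n) F y.
have : \forall y \near x, U y /\ forall j, `|D j x - D j y| < 1.
  apply: filterI; first by move: oU; rewrite openE => /(_ x Ux).
  apply: (@filter_forall _ _ (fun j y => `|D j x - D j y| < 1) (nbhs x) _) => j.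
  by move/cvgrPdist_lt: ((FC1 (delta_mx j 0)).2 x Ux) => /(_ 1 ltr01).
move/nbhs_ballP => [r r0 near_x].
pose M := \sum_(j < n) (`|D j x| + 1).
have Fball y : ball x r y -> (forall v, derivable F y v) /\ forall j, `|D j y| <= M.
  move=> /near_x [Uy Dy]; split=> [v|j]; first exact: (FC1 v).1.
  have Dyj : `|D j y| <= `|D j x| + 1.
    have -> : D j y = D j x - (D j x - D j y) by rewrite opprB addrC subrK.
    by apply: le_trans (ler_normB _ _) _; rewrite lerD // ltW.
  apply: le_trans Dyj _; rewrite /M (bigD1 j) //= lerDl.
  by apply: sumr_ge0 => i _; apply: addr_ge0.
have M0 : 0 <= M by apply: sumr_ge0 => j _; apply: addr_ge0.
apply/(@cvgrPdist_lt _ _ _ (nbhs x) (nbhs_filter x)) => eps eps0.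
set c := n%:R * M; have c0 : 0 <= c by apply: mulr_ge0.
pose d := Num.min r (eps / (c + 1) / 2).
have d0 : 0 < d by rewrite lt_min r0 /= !divr_gt0 // ltr_wpDl.
apply/nbhs_ballP; exists d => // y /(ball_cVP _ _ d0) xy.
have dr : d <= r by rewrite ge_min lexx.
have wd i : `|(y - x) i 0| < d by rewrite !mxE.
have := ler_coord_prefix_increment r0 dr wd Fball (leqnn n).
rewrite coord_prefix_full (addrC x) subrK distrC => /le_lt_trans; apply.
rewrite mulrA -/c.
have cd : (c + 1) * d <= eps / 2.
  have -> : eps / 2 = (c + 1) * (eps / (c + 1) / 2) by field; rewrite gt_eqF // ltr_wpDl.
  by rewrite ler_wpM2l ?addr_ge0 // ge_min lexx orbT.
apply: le_lt_trans (le_trans _ cd) _; first by rewrite ler_wpM2r ?lerDl // ltW.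
by rewrite ltr_pdivrMr // ltr_pMr // ltr1n.
Qed.

End ContinuousPartials.

Lemma continuous_compact_bounded (R : realType) (T : topologicalType) (C : set T)
    (F : T -> R) :
  compact C -> (forall y, C y -> {for y, continuous F}) ->
  exists M, forall y, C y -> `|F y| <= M.
Proof.
move=> Ccomp Fcont.
have : compact (F @` C).
  apply: continuous_compact Ccomp; apply: continuous_in_subspaceT => y.
  by rewrite inE => /Fcont.
move=> /compact_bounded [M [_ FM]]; exists (M + 1) => y Cy.
by apply: FM; [rewrite ltrDl | exists y].
Qed.

Lemma forcing_function_gt0 (R : realType) (xi : R -> R) :
  forcing_function xi -> forall t, 0 < t -> 0 < xi t.
Proof.
move=> [_ [_ [xi_ge0 [_ xi_cvg]]]] t t0.
rewrite lt_neqAle xi_ge0 ?ltW // andbT; apply/negP => /eqP xit.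
have : (fun=> t) @ \oo --> (0 : R).
  apply: xi_cvg => [k|]; first exact: ltW.
  have -> : xi \o (fun _ : nat => t) = fun=> 0 by apply: funext => k /=; rewrite -xit.
  exact: cvg_cst.
move/cvgrPdist_lt => /(_ t t0) [N _ /(_ N (leqnn N))].
by rewrite sub0r normrN gtr0_norm // ltxx.
Qed.

Lemma unbounded_nat_infinite (S : set nat) :
  (forall J, exists2 k, (J <= k)%N & S k) -> infinite_set S.
Proof.
move=> Sunb /finite_fsetP [X SX].
have [k + Sk] := Sunb (\max_(i <- finmap.enum_fset X) i).+1.
have kX : k \in finmap.enum_fset X by move: Sk; rewrite SX.
by rewrite ltnNge (@leq_bigmax_seq _ _ xpredT (fun i => i) k kX).
Qed.

Lemma exists_expr_lt (R : realType) (theta e : R) :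
  0 <= theta -> theta < 1 -> 0 < e -> exists N : nat, theta ^+ N < e.
Proof.
move=> theta0 theta1 e0.
have := @cvg_expr R theta; rewrite ger0_norm // => /(_ theta1).
move=> /cvgrPdist_lt /(_ e e0) [N _ /(_ N (leqnn N))].
by rewrite sub0r normrN ger0_norm ?exprn_ge0 //; exists N.
Qed.

Lemma nonincreasing_bounded_drops_finite (R : realType) (Z : nat -> R) (L eta : R) :
  0 < eta -> (forall k, Z k.+1 <= Z k) -> (forall k, L <= Z k) ->
  exists J, forall k, (J <= k)%N -> Z k - eta < Z k.+1.
Proof.
move=> eta0 Zdec ZL; apply: contrapT => /forallNP nodrop.
have drop J : exists2 k, (J <= k)%N & Z k.+1 <= Z k - eta.
  have /existsNP [k /not_implyP [Jk /negP]] := nodrop J.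
  by rewrite -leNgt; exists k.
have Zmono := iffLR (nonincreasing_seqP Z) Zdec.
have deep N : exists k, Z k <= Z 0%N - N%:R * eta.
  elim: N => [|N [k Zk]]; first by exists 0%N; rewrite mul0r subr0.
  have [k' kk' Zk'] := drop k; exists k'.+1.
  apply: le_trans Zk' _; rewrite -natr1 mulrDl mul1r opprD addrA lerB //.
  exact: le_trans (Zmono _ _ kk') Zk.
have [k Zk] := deep (Num.truncn ((Z 0%N - L) / eta)).+1.
have := ZL k; apply/negP; rewrite -ltNge; apply: le_lt_trans Zk _.
by rewrite ltrBlDr -ltrBlDl -ltr_pdivrMr // truncnS_gt.
Qed.

Section DirectSearchStall.
Variables (R : realType) (Z a : nat -> R) (xi : R -> R) (L theta phi delta : R).
Hypotheses (a0_gt0 : 0 < a 0%N) (theta_gt0 : 0 < theta) (theta_lt1 : theta < 1)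
  (phi_ge1 : 1 <= phi) (delta_gt0 : 0 < delta).
Hypotheses (xi_mono : forall s t, 0 <= s -> s <= t -> xi s <= xi t)
  (xi_gt0 : forall t, 0 < t -> 0 < xi t).
Hypothesis Z_ge : forall k, L <= Z k.
Hypothesis step : forall k,
  (Z k.+1 <= Z k - xi (a k) /\ a k.+1 = phi * a k) \/
  [/\ Z k.+1 = Z k, a k.+1 = theta * a k & delta < a k].

Lemma stepsize_ge_min k : Num.min (a 0%N) (theta * delta) <= a k.
Proof.
have mu0 : 0 < Num.min (a 0%N) (theta * delta) by rewrite lt_min a0_gt0 mulr_gt0.
elim: k => [|k IH]; first by rewrite ge_min lexx.
case: (step k) => [[_ ->]|[_ -> da]].
  by rewrite (le_trans IH) // ler_peMl // ltW // (lt_le_trans mu0 IH).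
by rewrite ge_min ler_pM2l // (ltW da) orbT.
Qed.

(* A bounded-below merit function leaves room for only finitely many sufficient
   decreases, after which the step size would contract geometrically below its
   positive lower bound. *)
Lemma direct_search_no_stall : False.
Proof.
set mu := Num.min (a 0%N) (theta * delta).
have mu0 : 0 < mu by rewrite lt_min a0_gt0 mulr_gt0.
have Zdec k : Z k.+1 <= Z k.
  case: (step k) => [[Zk _]|[-> _]] //; apply: le_trans Zk _.
  by rewrite lerBlDr lerDl ltW // xi_gt0 // (lt_le_trans mu0 (stepsize_ge_min k)).
have [J nodrop] := nonincreasing_bounded_drops_finite (xi_gt0 mu0) Zdec Z_ge.
have contract i : a (J + i)%N = theta ^+ i * a J.
  elim: i => [|i IH]; first by rewrite addn0 mul1r.
  rewrite addnS; case: (step (J + i)) => [[Zk _]|[_ -> _]]; last by rewrite IH exprS mulrA.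
  have := nodrop (J + i)%N (leq_addr _ _); rewrite ltNge => /negP[].
  by apply: le_trans Zk _; rewrite lerB // xi_mono ?stepsize_ge_min // ltW.
have aJ0 : 0 < a J := lt_le_trans mu0 (stepsize_ge_min J).
have [N thetaN] := exists_expr_lt (ltW theta_gt0) theta_lt1 (divr_gt0 mu0 aJ0).
by have := stepsize_ge_min (J + N); rewrite contract -ler_pdivrMr // leNgt thetaN.
Qed.

End DirectSearchStall.

(* An iteration of LOG-DS with the merit function read on its domain, where it is
   real-valued; successful search and poll steps are merged. *)
Definition logds_iteration {R : realType} {T : Type} (Z : T -> R -> R) (gm : T -> R)
    (xi : R -> R) (theta_a theta_r phi beta : R) (x : nat -> T) (alpha rho : nat -> R)
    (k : nat) : Prop :=
  (Z (x k.+1) (rho k) <= Z (x k) (rho k) - xi (alpha k) /\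
   alpha k.+1 = phi * alpha k /\ rho k.+1 = rho k) \/
  [/\ x k.+1 = x k, alpha k.+1 = theta_a * alpha k &
      rho k.+1 = if alpha k.+1 <= Num.min (rho k `^ beta) (gm (x k) ^+ 2)
                 then theta_r * rho k else rho k].

Section LogDSConvergence.
Variables (R : realType) (T : Type) (D : set T) (Z : T -> R -> R) (gm : T -> R).
Variables (xi : R -> R) (theta_a theta_r phi beta : R).
Variables (x : nat -> T) (alpha rho : nat -> R).
Hypotheses (alpha0_gt0 : 0 < alpha 0%N) (rho0_gt0 : 0 < rho 0%N).
Hypotheses (theta_a_gt0 : 0 < theta_a) (theta_a_lt1 : theta_a < 1).
Hypotheses (theta_r_gt0 : 0 < theta_r) (theta_r_lt1 : theta_r < 1).
Hypotheses (phi_ge1 : 1 <= phi) (beta_ge1 : 1 <= beta).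
Hypotheses (xi_mono : forall s t, 0 <= s -> s <= t -> xi s <= xi t)
  (xi_gt0 : forall t, 0 < t -> 0 < xi t).
Hypothesis x_in_D : forall k, D (x k).
Hypothesis Z_bounded_below : forall r, 0 < r -> exists L, forall y, D y -> L <= Z y r.
Hypothesis gm_sublevel_gt0 : forall r M, 0 < r ->
  exists2 c, 0 < c & forall y, D y -> Z y r <= M -> c <= gm y.
Hypothesis iteration : forall k, logds_iteration Z gm xi theta_a theta_r phi beta x alpha rho k.

Lemma alpha_rho_gt0 k : 0 < alpha k /\ 0 < rho k.
Proof.
elim: k => [|k [alpha_gt0 rho_gt0]]; first by split.
have phi_gt0 : 0 < phi := lt_le_trans ltr01 phi_ge1.
case: (iteration k) => [[_ [-> ->]]|[_ -> ->]]; first by rewrite mulr_gt0.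
by rewrite mulr_gt0 //; case: ifP; rewrite ?mulr_gt0.
Qed.

Lemma rho_nonincreasing : {homo rho : i j / (i <= j)%N >-> j <= i}.
Proof.
apply/(nonincreasing_seqP rho) => k.
case: (iteration k) => [[_ [_ ->]]|[_ _ ->]] //.
by case: ifP => // _; rewrite ler_piMl // ltW // (alpha_rho_gt0 k).2.
Qed.

Lemma rho_decreaseE k : rho k.+1 < rho k ->
  [/\ alpha k.+1 = theta_a * alpha k, alpha k.+1 <= rho k `^ beta &
      rho k.+1 = theta_r * rho k].
Proof.
case: (iteration k) => [[_ [_ ->]]|[_ alphaE ->]]; first by rewrite ltxx.
by case: ifP; rewrite ?ltxx // le_min => /andP[].
Qed.

(* With rho frozen the barrier keeps the iterates away from the boundary, so the
   contraction test can only fail while the step size stays above a positive level. *)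
Lemma rho_not_eventually_constant J : ~ (forall k, (J <= k)%N -> rho k = rho J).
Proof.
move=> rho_const; set r := rho J; have r0 : 0 < r := (alpha_rho_gt0 J).2.
pose Zs i := Z (x (J + i)%N) r; pose a i := alpha (J + i)%N.
have rhoS i : rho (J + i).+1 = r /\ rho (J + i)%N = r.
  by rewrite !rho_const // ?leq_addr // -addnS leq_addr.
have Zs_dec i : Zs i.+1 <= Zs i.
  rewrite /Zs addnS; have [rS ri] := rhoS i.
  case: (iteration (J + i)) => [[+ _]|[-> _ _]] //; rewrite ri => /le_trans; apply.
  by rewrite lerBlDr lerDl ltW // xi_gt0 // (alpha_rho_gt0 _).1.
have [L ZL] := Z_bounded_below r0.
have [c c0 gm_ge] := gm_sublevel_gt0 (Zs 0%N) r0.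
set eps := Num.min (r `^ beta) (c ^+ 2).
have eps0 : 0 < eps by rewrite lt_min powR_gt0 // exprn_gt0.
apply: (@direct_search_no_stall R Zs a xi L theta_a phi (eps / theta_a)) => //.
- exact: (alpha_rho_gt0 _).1.
- exact: divr_gt0.
- by move=> i; apply: ZL.
move=> i; rewrite /Zs /a addnS; have [rS ri] := rhoS i.
case: (iteration (J + i)) => [[Zi [-> _]]|[-> alphaE rE]]; first by left; rewrite -ri.
right; split => //.
have test_fails : eps < alpha (J + i).+1.
  have gm_c : c <= gm (x (J + i)%N).
    by apply: gm_ge => //; apply: (iffLR (nonincreasing_seqP Zs) Zs_dec 0%N i).
  have : Num.min (r `^ beta) (gm (x (J + i)%N) ^+ 2) < alpha (J + i).+1.
    rewrite ltNge; apply/negP => test; move: rE; rewrite rS ri test => rE.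
    by have := theta_r_lt1; nra.
  apply: le_lt_trans; rewrite le_min ge_min lexx /= ge_min.
  by apply/orP; right; rewrite !expr2 ler_pM // ltW.
by rewrite ltr_pdivrMr // mulrC -alphaE.
Qed.

Lemma rho_decreases_infinitely_often J : exists2 k, (J <= k)%N & rho k.+1 < rho k.
Proof.
apply: contrapT => no_decrease; apply: (@rho_not_eventually_constant J) => k Jk.
have rho_const i : (J <= i)%N -> rho i.+1 = rho i.
  move=> Ji; apply/eqP; rewrite eq_le rho_nonincreasing //= leNgt.
  by apply/negP => dec; apply: no_decrease; exists i.
rewrite -(subnKC Jk); elim: (k - J)%N => [|t IH]; first by rewrite addn0.
by rewrite addnS rho_const ?leq_addr.
Qed.

Lemma rho_cvg0 : rho @ \oo --> 0.
Proof.
have rho_geom N : exists k, rho k <= theta_r ^+ N * rho 0%N.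
  elim: N => [|N [k rhok]]; first by exists 0%N; rewrite mul1r.
  have [k' kk' /rho_decreaseE [_ _ rhoE]] := rho_decreases_infinitely_often k.
  exists k'.+1; rewrite rhoE exprS -mulrA ler_pM2l //.
  exact: le_trans (rho_nonincreasing kk') rhok.
apply/cvgrPdist_lt => e e0.
have [N thetaN] := exists_expr_lt (ltW theta_r_gt0) theta_r_lt1 (divr_gt0 e0 rho0_gt0).
have [k rhok] := rho_geom N; exists k => // j /= kj.
rewrite sub0r normrN gtr0_norm ?(alpha_rho_gt0 j).2 //.
apply: le_lt_trans (rho_nonincreasing kj) _; apply: le_lt_trans rhok _.
by rewrite -ltr_pdivlMr.
Qed.

Lemma alpha_cvg0_on_decreases : alpha @ within [set k | rho k.+1 < rho k] \oo --> 0.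
Proof.
apply/cvgrPdist_lt => e e0.
have e'0 : 0 < Num.min 1 (e * theta_a) by rewrite lt_min ltr01 mulr_gt0.
have [K _ rhoK] := (cvgrPdist_lt _ _).1 rho_cvg0 _ e'0.
exists K => // j /= Kj /rho_decreaseE [alphaE alpha_le _].
have [alpha_gt0 rho_gt0] := alpha_rho_gt0 j.
move: (rhoK j Kj); rewrite sub0r normrN gtr0_norm // lt_min => /andP[rho1 rhoe].
have alpha_rho : theta_a * alpha j <= rho j.
  by rewrite -alphaE (le_trans alpha_le) // ge1r_powR // rho_gt0 ltW.
rewrite sub0r normrN gtr0_norm // -(ltr_pM2r theta_a_gt0) mulrC.
exact: le_lt_trans alpha_rho rhoe.
Qed.

Lemma logds_convergence :
  [/\ infinite_set [set k | rho k.+1 < rho k], rho @ \oo --> 0 &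
      alpha @ within [set k | rho k.+1 < rho k] \oo --> 0].
Proof.
split; [|exact: rho_cvg0|exact: alpha_cvg0_on_decreases].
exact: unbounded_nat_infinite rho_decreases_infinitely_often.
Qed.

End LogDSConvergence.

Definition merit_domain {R : realType} {n m q : nat} (A : 'M[R]_(q, n)) (b : 'cV[R]_q)
    (g : 'I_m -> 'cV[R]_n -> R) (x0 x : 'cV[R]_n) : Prop :=
  polyhedron A b x /\ forall l, Glog g x0 l -> g l x < 0.

Definition merit_value {R : realType} {n m p : nat} (f : 'cV[R]_n -> R)
    (g : 'I_m -> 'cV[R]_n -> R) (h : 'I_p -> 'cV[R]_n -> R) (x0 : 'cV[R]_n) (nu : R)
    (x : 'cV[R]_n) (rho : R) : R :=
  f x - rho * (\sum_(l < m | Glog g x0 l) ln (- g l x))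
  + (rho `^ (nu - 1))^-1 * (\sum_(l < m | Gext g x0 l) (Num.max (g l x) 0) `^ nu)
  + (rho `^ (nu - 1))^-1 * (\sum_(j < p) `|h j x| `^ nu).

Section Merit.
Variables (R : realType) (n m p q : nat) (A : 'M[R]_(q, n)) (b : 'cV[R]_q).
Variables (f : 'cV[R]_n -> R) (g : 'I_m -> 'cV[R]_n -> R) (h : 'I_p -> 'cV[R]_n -> R).
Variables (x0 : 'cV[R]_n) (nu : R).
Local Notation dom := (merit_domain A b g x0).
Local Notation Zval := (merit_value f g h x0 nu).
Local Notation Z := (meritZ A b f g h x0 nu).

Lemma meritZE x r : dom x -> Z x r = (Zval x r)%:E.
Proof. by rewrite /meritZ; case: pselect. Qed.

Lemma meritZ_outside x r : ~ dom x -> Z x r = +oo%E.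
Proof. by rewrite /meritZ; case: pselect. Qed.

Lemma merit_value_ge_barrier x r :
  f x - r * \sum_(l < m | Glog g x0 l) ln (- g l x) <= Zval x r.
Proof.
rewrite /merit_value -addrA lerDl.
by rewrite addr_ge0 // mulr_ge0 ?invr_ge0 ?powR_ge0 // sumr_ge0 // => *; rewrite powR_ge0.
Qed.

Lemma gmin_ge x (c : R) : (exists l, Glog g x0 l) ->
  (forall l, Glog g x0 l -> c <= `|g l x|) -> c <= gmin g x0 x.
Proof.
move=> [l0 l0_log] c_le; rewrite /gmin.
set E := (\big[Order.min/+oo%E]_(l < m | Glog g x0 l) (`|g l x|)%:E)%E.
have c_E : (c%:E <= E)%E.
  apply: (big_ind (fun e => c%:E <= e)%E) => [|e1 e2|l /c_le]; rewrite ?leey //.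
  by rewrite le_min => -> ->.
have E_fin : (E <= (`|g l0 x|)%:E)%E by rewrite /E (bigD1 l0) //= ge_min lexx.
by move: E c_E E_fin => [e| |] //=; rewrite lee_fin.
Qed.

(* The algorithm accepts a point only if its merit is finite, so every iterate stays
   in the domain where the merit function is real-valued. *)
Lemma logds_run_iteration (DD : set (seq 'cV[R]_n)) (alpha0 rho0 theta_a theta_r phi beta : R)
    (xi : R -> R) (x : nat -> 'cV[R]_n) (alpha rho : nat -> R) :
  dom x0 ->
  logds_run A b f g h x0 DD alpha0 rho0 nu theta_a theta_r phi beta xi x alpha rho ->
  (forall k, dom (x k)) /\
  forall k, logds_iteration Zval (gmin g x0) xi theta_a theta_r phi beta x alpha rho k.
Proof.
move=> x0_dom [x00 _ _ run].
have step k :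
  ((Z (x k.+1) (rho k) <= Z (x k) (rho k) - (xi (alpha k))%:E)%E /\
    alpha k.+1 = phi * alpha k /\ rho k.+1 = rho k) \/
  [/\ x k.+1 = x k, alpha k.+1 = theta_a * alpha k &
      rho k.+1 = if alpha k.+1 <= Num.min (rho k `^ beta) (gmin g x0 (x k) ^+ 2)
                 then theta_r * rho k else rho k].
  case: (run k) => [[_ decr]|[Dk [_ [[d [_ [_ [decr [-> stepE]]]]]|[_ [-> stepE]]]]]].
  - by left.
  - by left.
  - by right; case: stepE => -> ->.
have dom_x k : dom (x k).
  elim: k => [|k IH]; first by rewrite x00.
  case: (step k) => [[decr _]|[-> _ _]] //.
  apply: contrapT => out; move: decr.
  by rewrite (meritZ_outside _ out) (meritZE _ IH) -EFinB leye_eq.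
split=> // k; case: (step k) => [[decr stepE]|?]; [left|by right].
by move: decr; rewrite !meritZE // -EFinB lee_fin.
Qed.

Section BarrierBounds.
Variables (Mf : R) (Mg : 'I_m -> R).
Hypothesis Mg_ge1 : forall l, 1 <= Mg l.
Hypothesis f_bound : forall y, dom y -> `|f y| <= Mf.
Hypothesis g_bound : forall l y, dom y -> `|g l y| <= Mg l.

Lemma ln_barrier_le l y : dom y -> Glog g x0 l -> ln (- g l y) <= ln (Mg l).
Proof.
move=> y_dom l_log; have g_lt0 := y_dom.2 l l_log.
rewrite ler_ln ?posrE ?oppr_gt0 // ?(lt_le_trans ltr01 (Mg_ge1 l)) //.
by apply: le_trans (g_bound l y_dom); rewrite -normrN ler_norm.
Qed.

Lemma merit_value_ge y r : 0 < r -> dom y ->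
  - Mf - r * \sum_(l < m | Glog g x0 l) ln (Mg l) <= Zval y r.
Proof.
move=> r0 y_dom; apply: le_trans (merit_value_ge_barrier y r).
have := f_bound y_dom; rewrite ler_norml => /andP[f_ge _].
have : r * \sum_(l < m | Glog g x0 l) ln (- g l y) <= r * \sum_(l < m | Glog g x0 l) ln (Mg l).
  by rewrite ler_pM2l // ler_sum // => l; apply: ln_barrier_le.
lra.
Qed.

(* On a sublevel set the barrier term cannot be large, so no [-g_l] is close to 0. *)
Lemma gmin_ge_merit_value y r M : (exists l, Glog g x0 l) -> 0 < r -> dom y ->
  Zval y r <= M ->
  expR ((- Mf - M) / r - \sum_(l < m | Glog g x0 l) ln (Mg l)) <= gmin g x0 y.
Proof.
move=> Glog_ne r0 y_dom ZM; apply: gmin_ge => // l l_log.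
set S := \sum_(l < m | Glog g x0 l) ln (Mg l).
have g_lt0 := y_dom.2 l l_log.
have others : \sum_(l' < m | Glog g x0 l' && (l' != l)) ln (- g l' y) <= S.
  rewrite /S [X in _ <= X](bigD1 l) //= -[X in X <= _]add0r lerD ?ln_ge0 //.
  by rewrite ler_sum // => l' /andP[l'_log _]; apply: ln_barrier_le.
have := merit_value_ge_barrier y r; rewrite (bigD1 l) //= => barrier.
have := f_bound y_dom; rewrite ler_norml => /andP[f_ge _].
have ln_ge : (- Mf - M) / r - S <= ln (- g l y).
  rewrite lerBlDr ler_pdivrMr // mulrC.
  have : r * (ln (- g l y) + \sum_(l' < m | Glog g x0 l' && (l' != l)) ln (- g l' y))
      <= r * (ln (- g l y) + S) by rewrite ler_pM2l // lerD2l.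
  lra.
rewrite -normrN ger0_norm ?oppr_ge0 ?(ltW g_lt0) // -[- g l y]lnK ?posrE ?oppr_gt0 //.
by rewrite ler_expR.
Qed.

End BarrierBounds.

Lemma merit_value_bounds : (exists l, Glog g x0 l) ->
  compact (polyhedron A b `&` Omega_log g x0) ->
  (forall y, (polyhedron A b `&` Omega_log g x0) y -> {for y, continuous f}) ->
  (forall l y, (polyhedron A b `&` Omega_log g x0) y -> {for y, continuous (g l)}) ->
  (forall r, 0 < r -> exists L, forall y, dom y -> L <= Zval y r) /\
  (forall r M, 0 < r -> exists2 c, 0 < c & forall y, dom y -> Zval y r <= M -> c <= gmin g x0 y).
Proof.
move=> Glog_ne C_compact f_cont g_cont.
have dom_C y : dom y -> (polyhedron A b `&` Omega_log g x0) y.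
  by move=> [y_poly y_int]; split => // l /y_int /ltW.
have [Mf f_le] := continuous_compact_bounded C_compact f_cont.
have [Mg g_le] : exists Mg : 'I_m -> R,
    forall l y, (polyhedron A b `&` Omega_log g x0) y -> `|g l y| <= Mg l.
  apply: (@fin_all_exists _ (fun=> R)
    (fun l M => forall y, (polyhedron A b `&` Omega_log g x0) y -> `|g l y| <= M)) => l.
  exact: continuous_compact_bounded C_compact (g_cont l).
have Mg_ge1 l : 1 <= Num.max 1 (Mg l) by rewrite le_max lexx.
have f_bound y : dom y -> `|f y| <= Mf by move/dom_C; apply: f_le.
have g_bound l y : dom y -> `|g l y| <= Num.max 1 (Mg l).
  by move=> /dom_C /(g_le l) /le_trans; apply; rewrite le_max lexx orbT.
split=> [r r0|r M r0].
  by eexists => y; exact: (merit_value_ge Mg_ge1 f_bound g_bound r0).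
exists (expR ((- Mf - M) / r - \sum_(l < m | Glog g x0 l) ln (Num.max 1 (Mg l)))).
  exact: expR_gt0.
by move=> y; apply: (gmin_ge_merit_value Mg_ge1 f_bound g_bound).
Qed.

End Merit.

Theorem theorem2p7 (R : realType) (n m p q : nat)
  (A : 'M[R]_(q, n)) (b : 'cV[R]_q)
  (f : 'cV[R]_n -> R) (g : 'I_m -> 'cV[R]_n -> R) (h : 'I_p -> 'cV[R]_n -> R)
  (x0 : 'cV[R]_n) (DD : set (seq 'cV[R]_n))
  (alpha0 rho0 nu theta_a theta_r phi beta : R) (xi : R -> R)
  (x : nat -> 'cV[R]_n) (alpha rho : nat -> R) :
  (* smoothness of the problem data *)
  (exists U : set 'cV[R]_n, open U /\ (polyhedron A b `<=` U) /\
     C1_on U f /\ (forall l, C1_on U (g l)) /\ (forall j, C1_on U (h j))) ->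
  (* algorithm data *)
  (forall D, DD D -> forall d, d \in D -> unit_vec d) ->
  0 < alpha0 -> 0 < rho0 -> 1 < nu -> nu <= 2 ->
  0 < theta_a < 1 -> 0 < theta_r < 1 -> 1 <= phi -> 1 < beta ->
  forcing_function xi ->
  (* assumptions of the theorem *)
  (exists l, Glog g x0 l) ->
  compact (polyhedron A b `&` Omega_log g x0) ->
  polyhedron A b x0 -> (forall l, Glog g x0 l -> g l x0 < 0) ->
  logds_run A b f g h x0 DD alpha0 rho0 nu theta_a theta_r phi beta xi x alpha rho ->
  [/\ infinite_set [set k : nat | rho k.+1 < rho k],
      rho @ \oo --> 0 &
      alpha @ within [set k : nat | rho k.+1 < rho k] \oo --> 0].
Proof.
move=> [U [U_open [X_U [f_C1 [g_C1 _]]]]] _ alpha0_gt0 rho0_gt0 _ _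
  /andP[theta_a_gt0 theta_a_lt1] /andP[theta_r_gt0 theta_r_lt1] phi_ge1 beta_gt1
  xi_forcing Glog_ne C_compact x0_poly x0_int run.
have C1_cont F : C1_on U F ->
    forall y, (polyhedron A b `&` Omega_log g x0) y -> {for y, continuous F}.
  by move=> F_C1 y [y_poly _]; exact: C1_on_continuous U_open F_C1 (X_U _ y_poly).
have [Z_lb gmin_sublevel] := merit_value_bounds h nu Glog_ne C_compact
  (C1_cont _ f_C1) (fun l => C1_cont _ (g_C1 l)).
have [x_dom iteration] := logds_run_iteration (conj x0_poly x0_int) run.
have xi_mono : forall s t, 0 <= s -> s <= t -> xi s <= xi t by case: xi_forcing => _ [].
case: run => _ alpha00 rho00 _.
apply: (logds_convergence _ _ theta_a_gt0 theta_a_lt1 theta_r_gt0 theta_r_lt1 phi_ge1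
  (ltW beta_gt1) xi_mono (forcing_function_gt0 xi_forcing) x_dom Z_lb gmin_sublevel iteration).
- by rewrite alpha00.
- by rewrite rho00.
Qed.
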